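(* There exists a constant $c>0$, independent of $n$, such that for all sufficiently large $n$, \[ \zeta_n> -c+\frac{\min\{1-\beta,\alpha\}}{\lambda_1}\log n . \]
   Context: Fix constants $r_0,d_0\ge 0$ with $\lambda_0:=r_0-d_0<0$, $d_1>0$, $k>1$, $\alpha\in(0,1)$, $\beta\in(0,1)$. Let $f:[0,\infty)^2\to[0,\infty)$ satisfy: (A1) $f$ is Lipschitz continuous; (A2) $f(x,y)=r_1$ when $x+y=0$ and $f(x,y)=d_1$ when $x+y=1$, where $r_1:=f(0,0)>d_1$; (A3) $f(x,y)=\Phi(x+y)$ for some non-increasing function $\Phi:[0,\infty)\to[0,\infty)$; (A4) $f(x,y)\to0$ as $x\to\infty$ and as $y\to\infty$; (A5) $f(x,y)\ge \lambda_1(1-(x+y))+d_1$ for all $x,y\ge0$, where $\lambda_1:=r_1-d_1>0$. Put $\phi(x,y):=f(x,y)-d_1$. For each integer $n\ge1$ let $K=K(n):=kn$ and let $(y_0,y_1,y_\beta)$ solve \[ \dot y_0=\lambda_0 y_0,\qquad \dot y_1=\phi(y_0,y_1)\,y_1+n^{-\alpha}y_0,\qquad \dot y_\beta=\phi(y_0,y_1)\,y_\beta, \] with $(y_0(0),y_1(0),y_\beta(0))=(n/K,\,n^\beta/K,\,n^\beta/K)$. Define the deterministic recurrence time $\zeta_n:=\inf\{t>0: y_1(t)=n/K\}$. *)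

From Stdlib Require Import Reals.
From Coquelicot Require Import Coquelicot.
Open Scope R_scope.

Definition phi_of (f : R -> R -> R) (d1 : R) (x y : R) : R := f x y - d1.

Definition is_solution (f : R -> R -> R) (lambda0 d1 k alpha beta : R) (n : nat)
    (y0 y1 yb : R -> R) : Prop :=
  let nR := INR n in
  let K := k * nR in
  y0 0 = nR / K /\ y1 0 = Rpower nR beta / K /\ yb 0 = Rpower nR beta / K /\
  filterlim y0 (at_right 0) (locally (y0 0)) /\
  filterlim y1 (at_right 0) (locally (y1 0)) /\
  filterlim yb (at_right 0) (locally (yb 0)) /\
  (forall t, 0 < t ->
     is_derive y0 t (lambda0 * y0 t) /\
     is_derive y1 t (phi_of f d1 (y0 t) (y1 t) * y1 t + Rpower nR (- alpha) * y0 t) /\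
     is_derive yb t (phi_of f d1 (y0 t) (y1 t) * yb t)).

(* zeta_n := inf { t > 0 : y1(t) = n/K }, as an extended real (+oo if the set is empty). *)
Definition zeta (k : R) (n : nat) (y1 : R -> R) : Rbar :=
  Glb_Rbar (fun t => 0 < t /\ y1 t = INR n / (k * INR n)).

(* While y1 stays above its initial value, the bounds phi <= lambda1 (from the
   monotonicity (A3)) and y0 <= 1/k (y0 decays since lambda0 < 0) give
   y1' <= lambda1 (y1 + a) with a := n^-alpha / (k lambda1), so
   exp (-lambda1 t) (y1 t + a) <= y1 0 + a.  At the hitting time y1 = 1/k, and
   y1 0 + a <= n^-m (1 + 1/lambda1) / k with m := min (1 - beta, alpha); hence
   lambda1 zeta_n >= m log n - log (1 + 1/lambda1). *)

From Stdlib Require Import Reals Lra.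
From Coquelicot Require Import Coquelicot.
Open Scope R_scope.

Lemma exp_le_exp x y : exp x <= exp y <-> x <= y.
Proof.
  split; intro H.
  - apply Rnot_lt_le. intro Hlt. pose proof (exp_increasing _ _ Hlt). lra.
  - destruct (Req_dec x y) as [->|Hne]; [lra|]. apply Rlt_le, exp_increasing. lra.
Qed.

Lemma is_derive_continuous (g : R -> R) x l :
  is_derive g x l -> filterlim g (locally x) (locally (g x)).
Proof. intro H. exact (ex_derive_continuous g x (ex_intro _ l H)). Qed.

Lemma filterlim_at_right_of_locally (g : R -> R) x :
  filterlim g (locally x) (locally (g x)) -> filterlim g (at_right x) (locally (g x)).
Proof. apply filterlim_filter_le_1, filter_le_within. Qed.

Lemma at_right_interval (s t : R) : s < t -> at_right s (fun u => s < u <= t).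
Proof.
  intro Hst. exists (mkposreal (t - s) ltac:(lra)). intros u Hu Hsu.
  cbn in Hu. unfold AbsRing_ball, abs, minus, plus, opp in Hu; cbn in Hu.
  apply Rabs_def2 in Hu. lra.
Qed.

Lemma is_derive_nonpos_le (g dg : R -> R) a b : a <= b ->
  (forall x, a <= x <= b -> is_derive g x (dg x)) ->
  (forall x, a <= x <= b -> dg x <= 0) -> g b <= g a.
Proof.
  intros Hab Hd Hn. destruct (Req_dec a b) as [<-|Hne]; [lra|].
  destruct (MVT_cor3 g dg a b) as [c [Hac [Hcb E]]]; [lra| |].
  - intros x Hax Hxb. apply is_derive_Reals, Hd. lra.
  - specialize (Hn c (conj Hac Hcb)). nra.
Qed.

Lemma is_derive_zero_eq (g dg : R -> R) a b : a <= b ->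
  (forall x, a <= x <= b -> is_derive g x (dg x)) ->
  (forall x, a <= x <= b -> dg x = 0) -> g b = g a.
Proof.
  intros Hab Hd Hz. apply Rle_antisym.
  - apply (is_derive_nonpos_le g dg); auto. intros x Hx. rewrite Hz; lra.
  - assert (H : - g b <= - g a); [|lra].
    apply (is_derive_nonpos_le (fun u => - g u) (fun u => - dg u)); auto.
    + intros x Hx. exact (is_derive_opp g x (dg x) (Hd x Hx)).
    + intros x Hx. rewrite Hz; lra.
Qed.

Lemma is_derive_exp_mult (h : R -> R) l x dh : is_derive h x dh ->
  is_derive (fun u => exp (l * u) * h u) x (exp (l * x) * (l * h x + dh)).
Proof.
  intro H.
  assert (He : is_derive (fun u => exp (l * u)) x (l * exp (l * x))).
  { auto_derive; [exact I | ring]. }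
  replace (exp (l * x) * (l * h x + dh)) with (l * exp (l * x) * h x + exp (l * x) * dh) by ring.
  exact (is_derive_mult _ _ _ _ _ He H (fun _ _ => Rmult_comm _ _)).
Qed.

Lemma linear_ode_solution (Y : R -> R) l :
  filterlim Y (at_right 0) (locally (Y 0)) ->
  (forall t, 0 < t -> is_derive Y t (l * Y t)) ->
  forall t, 0 < t -> Y t = Y 0 * exp (l * t).
Proof.
  intros Hrc Hd t Ht.
  (* exp (- l u) Y u is constant on (0, t]; right-continuity at 0 identifies the constant *)
  set (G := exp (- l * t) * Y t).
  assert (HG : forall s, 0 < s <= t -> Y s = G * exp (l * s)).
  { intros s Hs.
    assert (E : exp (- l * t) * Y t = exp (- l * s) * Y s).
    { apply (is_derive_zero_eq (fun u => exp (- l * u) * Y u)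
               (fun u => exp (- l * u) * (- l * Y u + l * Y u))); [lra| |].
      - intros x Hx. apply is_derive_exp_mult, Hd. lra.
      - intros x Hx. ring. }
    unfold G. rewrite E. replace (- l * s) with (- (l * s)) by ring.
    rewrite exp_Ropp. field. apply Rgt_not_eq, exp_pos. }
  assert (Hlim : filterlim Y (at_right 0) (locally G)).
  { apply (filterlim_ext_loc (fun s => G * exp (l * s))).
    - apply (filter_imp (fun s => 0 < s <= t)); [|now apply at_right_interval].
      intros s Hs. now rewrite HG.
    - assert (Hc : filterlim (fun s => G * exp (l * s)) (at_right 0)
                                (locally (G * exp (l * 0)))).
      { apply (filterlim_at_right_of_locally (fun s => G * exp (l * s))),
          (is_derive_continuous (fun s => G * exp (l * s)) 0 (G * (l * exp (l * 0)))).
        auto_derive; [exact I | ring]. }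
      now rewrite Rmult_0_r, exp_0, Rmult_1_r in Hc. }
  rewrite (filterlim_locally_unique Y (Y 0) G Hrc Hlim), (HG t); lra.
Qed.

Lemma last_exit (Y : R -> R) y t : 0 < t -> Y 0 <= y < Y t ->
  filterlim Y (at_right 0) (locally (Y 0)) ->
  (forall s, 0 < s <= t -> filterlim Y (locally s) (locally (Y s))) ->
  exists s, 0 <= s < t /\ Y s <= y /\ filterlim Y (at_right s) (locally (Y s)) /\
    forall u, s < u <= t -> y < Y u.
Proof.
  intros Ht [H0 Hyt] Hrc Hc.
  destruct (completeness (fun s => 0 <= s <= t /\ Y s <= y)) as [s [Hub Hlub]].
  { exists t. intros x Hx. lra. }
  { exists 0. split; lra. }
  assert (Hs0 : 0 <= s) by (apply Hub; split; lra).
  assert (Hst : s <= t) by (apply Hlub; intros x Hx; lra).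
  assert (Hys : Y s <= y).
  { destruct (Req_dec s 0) as [->|Hne]; [exact H0|].
    apply Rnot_lt_le. intro Hlt.
    destruct (Hc s ltac:(lra) _ (open_gt y (Y s) Hlt)) as [d Hd].
    assert (s <= s - d / 2); [|pose proof (cond_pos d); lra].
    apply Hlub. intros x [Hx Hyx]. apply Rnot_lt_le. intro Hlt'.
    assert (Hxs : x <= s) by (apply Hub; split; auto).
    assert (Hb : ball s d x).
    { cbn. unfold AbsRing_ball, abs, minus, plus, opp; cbn.
      apply Rabs_def1; lra. }
    specialize (Hd x Hb). cbn in Hd. lra. }
  assert (Hst' : s < t) by (destruct (Req_dec s t) as [->|]; lra).
  exists s. repeat split; auto.
  - destruct (Req_dec s 0) as [->|Hne]; [exact Hrc|].
    apply filterlim_at_right_of_locally, Hc. lra.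
  - intros u Hu. apply Rnot_le_lt. intro Hle.
    assert (u <= s) by (apply Hub; split; [lra | exact Hle]). lra.
Qed.

Lemma growth_bound_above_initial (Y dY : R -> R) lam a t :
  0 <= lam -> 0 <= Y 0 + a -> 0 < t ->
  filterlim Y (at_right 0) (locally (Y 0)) ->
  (forall s, 0 < s <= t -> is_derive Y s (dY s)) ->
  (forall s, 0 < s <= t -> Y 0 < Y s -> dY s <= lam * (Y s + a)) ->
  exp (- lam * t) * (Y t + a) <= Y 0 + a.
Proof.
  intros Hlam Ha Ht Hrc Hd Hgrowth.
  assert (Hexp : forall u, 0 <= u -> 0 < exp (- lam * u) <= 1).
  { intros u Hu. split; [apply exp_pos|]. rewrite <- exp_0. apply exp_le_exp. nra. }
  pose proof (Hexp t ltac:(lra)) as Et.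
  destruct (Rle_lt_dec (Y t) (Y 0)) as [Hle|Hlt]; [nra|].
  destruct (last_exit Y (Y 0) t Ht (conj (Rle_refl _) Hlt) Hrc)
    as [s [Hs [Hys [Hrcs Habove]]]].
  { intros u Hu. exact (is_derive_continuous Y u _ (Hd u Hu)). }
  (* on (s, t] the hypothesis applies, so exp (- lam u) (Y u + a) is nonincreasing there *)
  assert (Hdecr : forall u, s < u <= t -> exp (- lam * t) * (Y t + a) <= Y u + a).
  { intros u Hu.
    assert (Hmono : exp (- lam * t) * (Y t + a) <= exp (- lam * u) * (Y u + a)).
    { apply (is_derive_nonpos_le (fun v => exp (- lam * v) * (Y v + a))
               (fun v => exp (- lam * v) * (- lam * (Y v + a) + dY v))); [lra| |].
      - intros x Hx. apply (is_derive_exp_mult (fun v => Y v + a)).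
        pose proof (is_derive_plus Y (fun _ => a) x _ _ (Hd x ltac:(lra))
                      (is_derive_const a x)) as Hsum.
        unfold plus in Hsum; simpl in Hsum. now rewrite Rplus_0_r in Hsum.
      - intros x Hx. pose proof (exp_pos (- lam * x)).
        pose proof (Hgrowth x ltac:(lra) (Habove x ltac:(lra))). nra. }
    pose proof (Hexp u ltac:(lra)). pose proof (Habove u Hu). nra. }
  assert (Hlim : exp (- lam * t) * (Y t + a) - a <= Y s).
  { apply (closed_filterlim_loc Y (fun z => exp (- lam * t) * (Y t + a) - a <= z) (Y s) Hrcs).
    - apply (filter_imp (fun u => s < u <= t)); [|now apply at_right_interval].
      intros u Hu. specialize (Hdecr u Hu). lra.
    - apply closed_ge. }
  lra.
Qed.

Lemma linear_ode_decay_bounds (Y : R -> R) l : l <= 0 -> 0 <= Y 0 ->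
  filterlim Y (at_right 0) (locally (Y 0)) ->
  (forall t, 0 < t -> is_derive Y t (l * Y t)) ->
  forall t, 0 < t -> 0 <= Y t <= Y 0.
Proof.
  intros Hl HY0 Hrc Hd t Ht. rewrite (linear_ode_solution Y l Hrc Hd t Ht).
  assert (0 < exp (l * t) <= 1).
  { split; [apply exp_pos|]. rewrite <- exp_0. apply exp_le_exp. nra. }
  nra.
Qed.

Lemma hitting_time_exp_bound (Y Z rate : R -> R) lam b z E t :
  0 < lam -> 0 <= b <= E -> 0 < z -> 0 <= Y 0 <= E * z ->
  filterlim Y (at_right 0) (locally (Y 0)) ->
  (forall u, 0 < u -> is_derive Y u (rate u * Y u + b * Z u)) ->
  (forall u, 0 < u -> Z u <= z) ->
  (forall u, 0 < u -> 0 <= Y u -> rate u <= lam) ->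
  0 < t -> Y t = z -> exp (- lam * t) <= E * (1 + / lam).
Proof.
  intros Hlam Hb Hz HY0 Hrc Hd HZ Hrate Ht Hyt.
  set (a := b * z / lam).
  assert (Hla : lam * a = b * z) by (unfold a; field; lra).
  assert (Ha : 0 <= a <= E * z / lam).
  { unfold a, Rdiv. split.
    - apply Rmult_le_pos; [nra | left; now apply Rinv_0_lt_compat].
    - apply Rmult_le_compat_r; [left; now apply Rinv_0_lt_compat | nra]. }
  assert (Hgr := growth_bound_above_initial Y (fun u => rate u * Y u + b * Z u) lam a t
    ltac:(lra) ltac:(lra) Ht Hrc (fun u Hu => Hd u (proj1 Hu))).
  rewrite Hyt in Hgr.
  assert (Hexp : exp (- lam * t) * z <= E * (1 + / lam) * z).
  { assert (exp (- lam * t) * (z + a) <= Y 0 + a).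
    { apply Hgr. intros u Hu Habove.
      pose proof (Hrate u (proj1 Hu) ltac:(lra)). pose proof (HZ u (proj1 Hu)). nra. }
    replace (E * (1 + / lam) * z) with (E * z + E * z / lam) by (field; lra).
    pose proof (exp_pos (- lam * t)). nra. }
  now apply Rmult_le_reg_r in Hexp.
Qed.

Lemma phi_le_rate (f : R -> R -> R) d1 (Phi : R -> R) :
  (forall s t, 0 <= s -> s <= t -> Phi t <= Phi s) ->
  (forall x y, 0 <= x -> 0 <= y -> f x y = Phi (x + y)) ->
  forall x y, 0 <= x -> 0 <= y -> phi_of f d1 x y <= f 0 0 - d1.
Proof.
  intros Hmono Hf x y Hx Hy. unfold phi_of.
  rewrite (Hf x y), (Hf 0 0), Rplus_0_r by lra.
  pose proof (Hmono 0 (x + y) ltac:(lra) ltac:(lra)). lra.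
Qed.

Lemma solution_hitting_time_bound (f : R -> R -> R) (Phi : R -> R)
    lam0 d1 k alpha beta (n : nat) (y0 y1 yb : R -> R) t :
  lam0 < 0 -> 1 < k -> 0 < alpha -> beta < 1 -> d1 < f 0 0 ->
  (forall s u, 0 <= s -> s <= u -> Phi u <= Phi s) ->
  (forall x y, 0 <= x -> 0 <= y -> f x y = Phi (x + y)) ->
  (1 <= n)%nat -> is_solution f lam0 d1 k alpha beta n y0 y1 yb ->
  0 < t -> y1 t = INR n / (k * INR n) ->
  Rmin (1 - beta) alpha * ln (INR n) - ln (1 + / (f 0 0 - d1)) <= (f 0 0 - d1) * t.
Proof.
  intros Hlam0 Hk Ha Hb Hr1 Hmono HPhi Hn Hsol Ht Hyt.
  pose proof (Rmin_l (1 - beta) alpha) as Hm1. pose proof (Rmin_r (1 - beta) alpha) as Hm2.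
  set (lam1 := f 0 0 - d1). set (m := Rmin (1 - beta) alpha) in *.
  assert (HnR : 1 <= INR n) by (apply (le_INR 1 n) in Hn; exact Hn).
  assert (Hscale : INR n / (k * INR n) = / k) by (field; lra).
  assert (Hk' : 0 < / k) by (apply Rinv_0_lt_compat; lra).
  destruct Hsol as (H0 & H1 & _ & Hrc0 & Hrc1 & _ & Hd). rewrite Hscale in H0, Hyt.
  assert (Hy0 : forall u, 0 < u -> 0 <= y0 u <= / k).
  { rewrite <- H0. apply (linear_ode_decay_bounds y0 lam0); try lra; auto.
    intros u Hu. apply (Hd u Hu). }
  assert (Hinit : 0 <= y1 0 <= Rpower (INR n) (- m) * / k).
  { rewrite H1. replace (Rpower (INR n) beta / (k * INR n))
      with (Rpower (INR n) (beta + Ropp 1) * / k).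
    2:{ rewrite Rpower_plus, Rpower_Ropp, Rpower_1 by lra. field; lra. }
    split.
    - apply Rmult_le_pos; [left; apply exp_pos | lra].
    - apply Rmult_le_compat_r; [lra | apply Rle_Rpower; lra]. }
  assert (Hexp : exp (- lam1 * t) <= Rpower (INR n) (- m) * (1 + / lam1)).
  { apply (hitting_time_exp_bound y1 y0 (fun u => phi_of f d1 (y0 u) (y1 u))
             lam1 (Rpower (INR n) (- alpha)) (/ k)); auto.
    - unfold lam1; lra.
    - split; [left; apply exp_pos | apply Rle_Rpower; lra].
    - intros u Hu. apply (Hd u Hu).
    - intros u Hu. apply (Hy0 u Hu).
    - intros u Hu Hy1. pose proof (Hy0 u Hu).
      apply (phi_le_rate f d1 Phi); auto; lra. }
  assert (HC : 0 < 1 + / lam1).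
  { assert (0 < / lam1) by (apply Rinv_0_lt_compat; unfold lam1; lra). lra. }
  unfold Rpower in Hexp. rewrite <- (exp_ln _ HC), <- exp_plus in Hexp.
  apply (proj1 (exp_le_exp _ _)) in Hexp. lra.
Qed.

Lemma Glb_Rbar_gt (E : R -> Prop) x y :
  x < y -> (forall t, E t -> y <= t) -> Rbar_lt x (Glb_Rbar E).
Proof.
  intros Hxy Hlb. destruct (Glb_Rbar_correct E) as [_ Hgreatest].
  assert (Hy : Rbar_le y (Glb_Rbar E)) by (apply Hgreatest; intros t Ht; exact (Hlb t Ht)).
  destruct (Glb_Rbar E); simpl in *; lra.
Qed.

Theorem lemmaA2
  (r0 d0 d1 k alpha beta : R) (f : R -> R -> R)
  (Hr0 : 0 <= r0) (Hd0 : 0 <= d0) (Hlam0 : r0 - d0 < 0)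
  (Hd1 : 0 < d1) (Hk : 1 < k)
  (Ha0 : 0 < alpha) (Ha1 : alpha < 1) (Hb0 : 0 < beta) (Hb1 : beta < 1)
  (Hfnn : forall x y, 0 <= x -> 0 <= y -> 0 <= f x y)
  (* (A1) Lipschitz *)
  (HA1 : exists L, forall x y x' y', 0 <= x -> 0 <= y -> 0 <= x' -> 0 <= y' ->
           Rabs (f x y - f x' y') <= L * (Rabs (x - x') + Rabs (y - y')))
  (* (A2) f = r1 := f(0,0) on x+y=0, f = d1 on x+y=1, r1 > d1 *)
  (HA2a : forall x y, 0 <= x -> 0 <= y -> x + y = 0 -> f x y = f 0 0)
  (HA2b : forall x y, 0 <= x -> 0 <= y -> x + y = 1 -> f x y = d1)
  (HA2c : f 0 0 > d1)
  (* (A3) f(x,y) = Phi(x+y), Phi : [0,oo) -> [0,oo) non-increasing *)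
  (HA3 : exists Phi : R -> R,
           (forall s, 0 <= s -> 0 <= Phi s) /\
           (forall s t, 0 <= s -> s <= t -> Phi t <= Phi s) /\
           (forall x y, 0 <= x -> 0 <= y -> f x y = Phi (x + y)))
  (* (A4) f(x,y) -> 0 as x -> oo and as y -> oo *)
  (HA4x : forall y, 0 <= y -> is_lim (fun x => f x y) p_infty 0)
  (HA4y : forall x, 0 <= x -> is_lim (fun y => f x y) p_infty 0)
  (* (A5) f(x,y) >= lambda1 (1 - (x+y)) + d1, lambda1 := r1 - d1 *)
  (HA5 : forall x y, 0 <= x -> 0 <= y -> f x y >= (f 0 0 - d1) * (1 - (x + y)) + d1)
  (y0 y1 yb : nat -> R -> R)
  (Hsol : forall n : nat, (1 <= n)%nat ->
            is_solution f (r0 - d0) d1 k alpha beta n (y0 n) (y1 n) (yb n)) :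
  exists c : R, 0 < c /\
    exists N : nat, forall n : nat, (N <= n)%nat ->
      Rbar_lt (Finite (- c + Rmin (1 - beta) alpha / (f 0 0 - d1) * ln (INR n)))
              (zeta k n (y1 n)).
Proof.
  destruct HA3 as (Phi & _ & Hmono & HPhi).
  set (lam1 := f 0 0 - d1). set (C := 1 + / lam1).
  assert (Hlam1 : 0 < lam1) by (unfold lam1; lra).
  assert (HlnC : 0 < ln C).
  { rewrite <- ln_1. apply ln_increasing; [lra|].
    assert (0 < / lam1) by (apply Rinv_0_lt_compat; lra). unfold C; lra. }
  exists (ln C / lam1 + 1). split.
  { assert (0 < ln C / lam1) by (apply Rdiv_lt_0_compat; lra). lra. }
  exists 1%nat. intros n Hn. unfold zeta.
  apply (Glb_Rbar_gt _ _ ((Rmin (1 - beta) alpha * ln (INR n) - ln C) / lam1)).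
  - replace ((Rmin (1 - beta) alpha * ln (INR n) - ln C) / lam1)
      with (- (ln C / lam1) + Rmin (1 - beta) alpha / lam1 * ln (INR n)) by (field; lra).
    lra.
  - intros t [Ht Hyt].
    pose proof (solution_hitting_time_bound f Phi (r0 - d0) d1 k alpha beta n
                  (y0 n) (y1 n) (yb n) t Hlam0 Hk Ha0 Hb1 HA2c Hmono HPhi Hn (Hsol n Hn) Ht Hyt)
      as Hbound.
    apply (Rmult_le_reg_l lam1); [exact Hlam1|]. unfold Rdiv.
    rewrite <- Rmult_assoc, Rinv_r_simpl_m by lra. exact Hbound.
Qed.
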